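(* Let $\psi_0:\mathbb{R}\to\mathbb{R}$ be a càdlàg function with $\lim_{|x|\to\infty}x^{-2}\psi_0(x)=0$, and let $\bar c$, $a(\cdot)$ and $\mathcal{A}$ be as in the context. Then (i) $\mathrm{Supp}(d\bar c)\subseteq \mathcal{A}$; (ii) $\{y:\exists\, x \text{ with } a(x)=y\}\subseteq \mathrm{Supp}(d\bar c)$. Consequently, if $\{y:\exists\, x \text{ with } a(x)=y\}$ is closed, then $\mathrm{Supp}(d\bar c)=\mathcal{A}$.
   Context: For $x\in\mathbb{R}$, $a(x)$ is the largest maximizer of $y\mapsto \psi_0(y)\vee\psi_0(y-)-\tfrac12(y-x)^2$ over $y\in\mathbb{R}$, i.e. the supremum of the set of all $y$ at which this supremum is attained. The shock structure is $\mathcal{A}:=\overline{\{y\in\mathbb{R}: a(x)=y \text{ for some } x\in\mathbb{R}\}}$ (closure of the range of $a$). $\bar C:\mathbb{R}\to\mathbb{R}$ denotes the concave majorant of $x\mapsto \psi_0(x)-\tfrac12 x^2$, i.e. the minimal concave function with $\bar C(x)\ge (\psi_0(x)\vee\psi_0(x-))-\tfrac12x^2$ for all $x$; $\bar c$ is its right-continuous derivative, which is non-increasing, and $d\bar c$ is the associated Stieltjes measure; $\mathrm{Supp}(d\bar c)$ is its support. *)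

From Stdlib Require Import Reals Lra ClassicalEpsilon.
Open Scope R_scope.

Definition is_left_lim (f : R -> R) (x l : R) : Prop :=
  forall eps, 0 < eps -> exists d, 0 < d /\
    forall y, x - d < y < x -> Rabs (f y - l) < eps.

Definition cadlag (f : R -> R) : Prop :=
  (forall x eps, 0 < eps -> exists d, 0 < d /\
     forall y, x <= y < x + d -> Rabs (f y - f x) < eps) /\
  (forall x, exists l, is_left_lim f x l).

(* f(x-) : the left limit (well defined when f is cadlag) *)
Definition left_lim (f : R -> R) (x : R) : R :=
  epsilon (inhabits 0) (fun l => is_left_lim f x l).

Definition subquadratic (f : R -> R) : Prop :=
  forall eps, 0 < eps -> exists M, forall x, M < Rabs x ->
    Rabs (f x / x ^ 2) < eps.

Definition psimax (psi : R -> R) (y : R) : R := Rmax (psi y) (left_lim psi y).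

Definition objective (psi : R -> R) (x y : R) : R :=
  psimax psi y - / 2 * (y - x) ^ 2.

Definition argmax (psi : R -> R) (x : R) (y : R) : Prop :=
  forall z, objective psi x z <= objective psi x y.

Definition a_rel (psi : R -> R) (x y : R) : Prop :=
  is_lub (argmax psi x) y.

Definition a_range (psi : R -> R) (y : R) : Prop := exists x, a_rel psi x y.

Definition closureR (S : R -> Prop) (y : R) : Prop :=
  forall eps, 0 < eps -> exists s, S s /\ Rabs (s - y) < eps.

Definition closed_setR (S : R -> Prop) : Prop := forall y, closureR S y -> S y.

Definition shock_structure (psi : R -> R) : R -> Prop := closureR (a_range psi).

Definition concave (C : R -> R) : Prop :=
  forall x y t, 0 <= t <= 1 -> t * C x + (1 - t) * C y <= C (t * x + (1 - t) * y).

Definition is_concave_majorant (h C : R -> R) : Prop :=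
  concave C /\ (forall x, h x <= C x) /\
  (forall D, concave D -> (forall x, h x <= D x) -> forall x, C x <= D x).

Definition is_right_deriv (C c : R -> R) : Prop :=
  forall x eps, 0 < eps -> exists d, 0 < d /\
    forall h, 0 < h < d -> Rabs ((C (x + h) - C x) / h - c x) < eps.

(* Stieltjes measure of the open interval (u,v) for a non-increasing
   right-continuous c:  |dc|((u,v)) = c(u) - c(v-). *)
Definition stieltjes_open (c : R -> R) (u v : R) : R := c u - left_lim c v.

Definition supp_dc (c : R -> R) (y : R) : Prop :=
  forall eps, 0 < eps -> stieltjes_open c (y - eps) (y + eps) <> 0.

(** Write [h w = psi(w) \/ psi(w-) - w^2/2].  Since
    [objective x w = h w + x w - x^2/2], for every level [m] bounding the
    objective the affine function [tangent_line x m] of slope [-x] lies above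
    [h], hence above its concave majorant [Cbar]; for [m] the maximum it
    touches [Cbar] at every maximiser, in particular at [a(x)].

    As [psi] is càdlàg and subquadratic, the objective
      is usc and tends to [-oo], so [a(x)] exists and is a maximiser, and
      right of [a(x)] the objective stays below its maximum with a linear
      margin; consequently [Cbar] lies strictly below the tangent line there.
    - Concave functions: tangent lines of slope [cbar] support [Cbar], and
      [cbar] is constant wherever [Cbar] is affine, and conversely.
    - (ii) If [y = a(x)] and [dcbar] vanished near [y], [Cbar] would be affine
      near [y], touching the tangent line at [y] yet strictly below it on the
      right: impossible.
    - (i) For any [z], the tangent line of slope [cbar z] at [z] also touches
      [Cbar] at some [a(x) >= z], so [cbar] is flat on [[z, a(x))]; a point far
      from the range of [a] thus lies inside a flat stretch of [cbar].
    The final equality is (i) and (ii) combined with closedness. *)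

From Stdlib Require Import Reals Lra Psatz ClassicalEpsilon Classical.
Open Scope R_scope.

(** ** Left limits *)

Lemma left_lim_spec (f : R -> R) (v : R) :
  (exists l, is_left_lim f v l) -> is_left_lim f v (left_lim f v).
Proof. intros H. unfold left_lim. apply epsilon_spec. exact H. Qed.

Lemma is_left_lim_unique (f : R -> R) (v l1 l2 : R) :
  is_left_lim f v l1 -> is_left_lim f v l2 -> l1 = l2.
Proof.
  intros H1 H2. apply NNPP. intros Hne.
  assert (Hpos : 0 < Rabs (l1 - l2)) by (apply Rabs_pos_lt; lra).
  assert (Hgap : 0 < Rabs (l1 - l2) / 2) by lra.
  destruct (H1 _ Hgap) as [d1 [Hd1 H1']]. destruct (H2 _ Hgap) as [d2 [Hd2 H2']].
  set (u := v - Rmin d1 d2 / 2).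
  assert (Hmin := Rmin_glb_lt _ _ _ Hd1 Hd2).
  specialize (H1' u ltac:(unfold u; pose proof (Rmin_l d1 d2); lra)).
  specialize (H2' u ltac:(unfold u; pose proof (Rmin_r d1 d2); lra)).
  pose proof (Rabs_triang (f u - l2) (l1 - f u)) as Htri.
  rewrite <- Rabs_Ropp in H1'.
  replace (f u - l2 + (l1 - f u)) with (l1 - l2) in Htri by ring.
  replace (- (f u - l1)) with (l1 - f u) in H1' by ring.
  lra.
Qed.

Lemma left_lim_le (f : R -> R) (v l K : R) : is_left_lim f v l ->
  (exists d, 0 < d /\ forall u, v - d < u < v -> f u <= K) -> l <= K.
Proof.
  intros H [d0 [Hd0 Hu]]. apply Rnot_lt_le; intro Hlt.
  destruct (H (l - K) ltac:(lra)) as [d [Hd Hd']].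
  pose proof (Rmin_l d d0). pose proof (Rmin_r d d0).
  pose proof (Rmin_glb_lt _ _ _ Hd Hd0).
  set (u := v - Rmin d d0 / 2).
  specialize (Hd' u ltac:(unfold u; lra)). specialize (Hu u ltac:(unfold u; lra)).
  apply Rabs_def2 in Hd'. lra.
Qed.

Lemma left_lim_locally_const (f : R -> R) (v k : R) :
  (exists d, 0 < d /\ forall u, v - d < u < v -> f u = k) -> left_lim f v = k.
Proof.
  intros [d [Hd Hu]].
  assert (Hk : is_left_lim f v k).
  { intros e He. exists d; split; auto. intros u Hu'. rewrite (Hu u Hu').
    unfold Rminus. rewrite Rplus_opp_r, Rabs_R0. lra. }
  apply (is_left_lim_unique f v); auto. apply left_lim_spec. eauto.
Qed.

Definition nonincreasing (c : R -> R) : Prop := forall u w, u < w -> c w <= c u.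

(** Monotone functions have left limits (the supremum of [-c] on the left). *)
Lemma nonincreasing_left_lim (c : R -> R) (v : R) :
  nonincreasing c -> exists l, is_left_lim c v l.
Proof.
  intros Hmon.
  set (E := fun r => exists u, v - 1 < u < v /\ r = - c u).
  assert (Hb : bound E).
  { exists (- c v). intros r [u [Hu ->]]. specialize (Hmon u v ltac:(lra)). lra. }
  assert (Hne : exists r, E r) by (exists (- c (v - /2)); exists (v - /2); split; [lra|auto]).
  destruct (completeness E Hb Hne) as [M [HM1 HM2]].
  exists (- M). intros eps Heps.
  destruct (classic (exists r, E r /\ M - eps < r)) as [[r [[u0 [Hu0 ->]] Hr]] | Hno].
  - exists (v - u0). split; [lra|]. intros u Hu.
    assert (Eu : E (- c u)) by (exists u; split; [lra|auto]).
    specialize (HM1 _ Eu). specialize (Hmon u0 u ltac:(lra)).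
    apply Rabs_def1; lra.
  - exfalso. assert (M <= M - eps); [|lra]. apply HM2. intros r Er.
    apply Rnot_lt_le. intro. apply Hno. eauto.
Qed.

(** ** Upper semicontinuity and compactness of segments *)

Definition usc_at (g : R -> R) (w : R) : Prop :=
  forall eps, 0 < eps -> exists d, 0 < d /\
    forall v, Rabs (v - w) < d -> g v <= g w + eps.

(** Compactness of [[a, b]], in the form needed here: local upper bounds
    taken from a family closed under [Rmax] glue into a global one.  The proof
    pushes the right end of the bounded initial segments to [b]. *)
Lemma bound_from_local_bounds (g : R -> R) (Good : R -> Prop) (a b : R) :
  (forall K1 K2, Good K1 -> Good K2 -> Good (Rmax K1 K2)) -> a <= b ->
  (forall u, a <= u <= b -> exists d, 0 < d /\ exists K, Good K /\
      forall v, Rabs (v - u) < d -> g v <= K) ->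
  exists K, Good K /\ forall u, a <= u <= b -> g u <= K.
Proof.
  intros HG Hab Hloc.
  set (S t := a <= t <= b /\ exists K, Good K /\ forall u, a <= u <= t -> g u <= K).
  assert (Sa : S a).
  { destruct (Hloc a (conj (Rle_refl a) Hab)) as [d [Hd [K [HK HK']]]].
    split; [lra|]. exists K; split; auto. intros u Hu. apply HK'.
    replace (u - a) with 0 by lra. rewrite Rabs_R0; lra. }
  assert (Hb : bound S) by (exists b; intros t [Ht _]; lra).
  destruct (completeness S Hb (ex_intro _ a Sa)) as [s [Hs1 Hs2]].
  assert (Has : a <= s) by (apply Hs1; exact Sa).
  assert (Hsb : s <= b) by (apply Hs2; intros t [Ht _]; lra).
  destruct (Hloc s (conj Has Hsb)) as [d [Hd [K0 [HK0 HK0']]]].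
  (* some bounded initial segment reaches into the neighbourhood of [s] *)
  assert (Ht : exists t, S t /\ s - d < t).
  { apply NNPP; intro Hno.
    assert (s <= s - d); [|lra]. apply Hs2. intros t St. apply Rnot_lt_le. intro.
    apply Hno. exists t; split; auto. }
  destruct Ht as [t [[Ht1 [K1 [HK1 HK1']]] Hts]].
  assert (Htl : t <= s) by (apply Hs1; split; [auto|exists K1; auto]).
  (* ... so the segment up to [min (s + d/2) b] is bounded, forcing it to be [b] *)
  set (t' := Rmin (s + d/2) b).
  pose proof (Rmin_l (s + d/2) b) as Ht'1. pose proof (Rmin_r (s + d/2) b) as Ht'2.
  assert (Ht'3 : t' = s + d/2 \/ t' = b) by (unfold t', Rmin; destruct Rle_dec; auto).
  assert (St' : S t').
  { split. { fold t' in Ht'1, Ht'2. destruct Ht'3; lra. }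
    exists (Rmax K1 K0); split; [apply HG; auto|].
    intros u Hu. destruct (Rle_or_lt u t).
    - eapply Rle_trans; [apply HK1'; lra | apply Rmax_l].
    - eapply Rle_trans; [apply HK0' | apply Rmax_r].
      fold t' in Ht'1. apply Rabs_def1; lra. }
  assert (t' <= s) by (apply Hs1; exact St').
  assert (Heq : t' = b) by (destruct Ht'3; lra).
  rewrite Heq in St'. destruct St' as [_ [K [HK HK']]]. exists K; auto.
Qed.

Lemma usc_attains_max (g : R -> R) (a b : R) : a <= b ->
  (forall u, a <= u <= b -> usc_at g u) ->
  exists u, a <= u <= b /\ forall v, a <= v <= b -> g v <= g u.
Proof.
  intros Hab Husc.
  assert (Hbd : exists K, True /\ forall u, a <= u <= b -> g u <= K).
  { apply bound_from_local_bounds; auto. intros u Hu.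
    destruct (Husc u Hu 1 ltac:(lra)) as [d [Hd Hd']].
    exists d; split; auto. exists (g u + 1); split; auto. }
  destruct Hbd as [K [_ HK]].
  set (E := fun r => exists u, a <= u <= b /\ r = g u).
  assert (HbE : bound E) by (exists K; intros r [u [Hu ->]]; auto).
  assert (HnE : exists r, E r) by (exists (g a); exists a; split; [lra|auto]).
  destruct (completeness E HbE HnE) as [M [HM1 HM2]].
  assert (HgM : forall v, a <= v <= b -> g v <= M) by (intros v Hv; apply HM1; exists v; auto).
  destruct (classic (exists u, a <= u <= b /\ M <= g u)) as [[u [Hu HMu]] | Hno].
  - exists u. split; auto. intros v Hv. specialize (HgM v Hv). lra.
  - (* otherwise the local bounds can all be taken below [M], and so can a global one *)
    exfalso.
    assert (Hb : exists K, K < M /\ forall u, a <= u <= b -> g u <= K).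
    { apply bound_from_local_bounds; auto.
      - intros K1 K2 ? ?. unfold Rmax; destruct Rle_dec; auto.
      - intros u Hu.
        assert (Hgu : g u < M) by (apply Rnot_le_lt; intro; apply Hno; eauto).
        destruct (Husc u Hu ((M - g u)/2) ltac:(lra)) as [d [Hd Hd']].
        exists d; split; auto. exists (g u + (M - g u)/2); split; [lra|]. auto. }
    destruct Hb as [K' [HK' HK'']].
    assert (M <= K'); [|lra]. apply HM2. intros r [u [Hu ->]]. auto.
Qed.

(** ** The objective [y |-> psimax psi y - (y - x)^2 / 2] *)

(** [y |-> psi(y) \/ psi(y-)] is upper semicontinuous when [psi] is càdlàg:
    near [w], values and left limits are close to [psi w] on the right of [w]
    and to [psi(w-)] on its left. *)
Lemma psimax_usc (psi : R -> R) (w : R) : cadlag psi -> usc_at (psimax psi) w.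
Proof.
  intros [Hrc Hll] eps Heps.
  assert (HL := left_lim_spec psi w (Hll w)). set (L := left_lim psi w) in *.
  destruct (Hrc w (eps/2) ltac:(lra)) as [d1 [Hd1 H1]].
  destruct (HL (eps/2) ltac:(lra)) as [d2 [Hd2 H2]].
  pose proof (Rmin_l d1 d2). pose proof (Rmin_r d1 d2).
  pose proof (Rmin_glb_lt _ _ _ Hd1 Hd2).
  exists (Rmin d1 d2); split; auto. intros v Hv. apply Rabs_def2 in Hv.
  assert (Hw1 : psi w <= psimax psi w) by apply Rmax_l.
  assert (Hw2 : L <= psimax psi w) by apply Rmax_r.
  assert (HLv := left_lim_spec psi v (Hll v)).
  unfold psimax at 1.
  destruct (Rtotal_order v w) as [Hlt | [-> | Hgt]].
  - apply Rmax_lub.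
    + specialize (H2 v ltac:(lra)). apply Rabs_def2 in H2. lra.
    + assert (left_lim psi v <= L + eps/2); [|lra].
      apply (left_lim_le psi v); auto. exists (v - (w - Rmin d1 d2)). split; [lra|].
      intros u Hu. specialize (H2 u ltac:(lra)). apply Rabs_def2 in H2. lra.
  - unfold psimax; lra.
  - apply Rmax_lub.
    + specialize (H1 v ltac:(lra)). apply Rabs_def2 in H1. lra.
    + assert (left_lim psi v <= psi w + eps/2); [|lra].
      apply (left_lim_le psi v); auto. exists (v - w). split; [lra|].
      intros u Hu. specialize (H1 u ltac:(lra)). apply Rabs_def2 in H1. lra.
Qed.

(** Subtracting a continuous function preserves upper semicontinuity. *)
Lemma objective_usc (psi : R -> R) (x w : R) : cadlag psi -> usc_at (objective psi x) w.
Proof.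
  intros Hc eps Heps.
  destruct (psimax_usc psi w Hc (eps/2) ltac:(lra)) as [d1 [Hd1 H1]].
  set (A := Rabs (w - x)). assert (HA : 0 <= A) by apply Rabs_pos.
  set (d2 := eps / (2 * (A + 1))).
  assert (Hd2 : 0 < d2) by (unfold d2; apply Rdiv_lt_0_compat; lra).
  assert (Hd2A : d2 * (A + 1) = eps / 2) by (unfold d2; field; lra).
  pose proof (Rmin_l d1 d2). pose proof (Rmin_r d1 d2).
  pose proof (Rmin_glb_lt _ _ _ Hd1 Hd2).
  exists (Rmin d1 d2); split; auto. intros v Hv.
  specialize (H1 v ltac:(lra)).
  assert (Hcross : - ((v - w) * (w - x)) <= Rabs (v - w) * A).
  { unfold A. rewrite <- Rabs_mult, <- Rabs_Ropp. apply Rle_abs. }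
  assert (Hcross' : Rabs (v - w) * A <= d2 * A) by (apply Rmult_le_compat_r; lra).
  assert (Hsq : (v - x) ^ 2 = (w - x) ^ 2 + 2 * ((v - w) * (w - x)) + (v - w) ^ 2) by ring.
  pose proof (pow2_ge_0 (v - w)).
  unfold objective. rewrite Hsq. nra.
Qed.

(** Subquadratic growth of [psi] bounds [psimax psi] by [w^2/4] far out
    (the left limit is controlled by the values on [(w - 1, w)]). *)
Lemma psimax_quadratic_bound (psi : R -> R) : cadlag psi -> subquadratic psi ->
  exists M, forall w, M <= Rabs w -> psimax psi w <= w ^ 2 / 4.
Proof.
  intros [_ Hll] Hs. destruct (Hs (/8) ltac:(lra)) as [M HM].
  assert (Hpsi : forall u, Rmax M 1 < Rabs u -> psi u <= u ^ 2 / 8).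
  { intros u Hu. pose proof (Rmax_l M 1). pose proof (Rmax_r M 1).
    specialize (HM u ltac:(lra)). apply Rabs_def2 in HM.
    assert (Hu0 : u <> 0) by (intros ->; rewrite Rabs_R0 in Hu; lra).
    assert (Hp : 0 < u ^ 2) by (rewrite <- pow2_abs; apply pow_lt, Rabs_pos_lt, Hu0).
    assert (Heq : psi u = psi u / u ^ 2 * u ^ 2) by (field; auto).
    rewrite Heq. destruct HM. nra. }
  exists (Rmax (Rmax M 1 + 1) 3). intros w Hw.
  pose proof (Rmax_l (Rmax M 1 + 1) 3). pose proof (Rmax_r (Rmax M 1 + 1) 3).
  rewrite <- (pow2_abs w). set (r := Rabs w) in *.
  unfold psimax. apply Rmax_lub.
  - specialize (Hpsi w ltac:(unfold r in *; lra)). rewrite <- (pow2_abs w) in Hpsi.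
    fold r in Hpsi. nra.
  - apply (left_lim_le psi w); [apply left_lim_spec; auto|]. exists 1. split; [lra|].
    intros u Hu.
    assert (Hwu : Rabs (w - u) < 1) by (rewrite Rabs_right; lra).
    assert (Huw : Rabs (u - w) < 1) by (rewrite Rabs_minus_sym; exact Hwu).
    pose proof (Rabs_triang_inv w u). pose proof (Rabs_triang_inv u w).
    specialize (Hpsi u ltac:(unfold r in *; lra)). rewrite <- (pow2_abs u) in Hpsi.
    pose proof (Rabs_pos u). unfold r in *. nra.
Qed.

Lemma objective_coercive (psi : R -> R) (x beta : R) : cadlag psi -> subquadratic psi ->
  exists R0, 0 < R0 /\ forall w, R0 <= Rabs w -> objective psi x w + beta <= - Rabs w.
Proof.
  intros Hc Hs. destruct (psimax_quadratic_bound psi Hc Hs) as [M HM].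
  pose proof (Rabs_pos x). pose proof (Rabs_pos beta).
  exists (Rmax M 1 + 4 * (Rabs x + Rabs beta + 2)).
  pose proof (Rmax_l M 1). pose proof (Rmax_r M 1). split; [lra|].
  intros w Hw. specialize (HM w ltac:(lra)).
  assert (Hwx : w * x <= Rabs w * Rabs x) by (rewrite <- Rabs_mult; apply Rle_abs).
  pose proof (Rle_abs beta). pose proof (pow2_ge_0 x).
  rewrite <- (pow2_abs w) in HM. set (r := Rabs w) in *.
  assert (Hrr : r * r >= r * (4 * (Rabs x + Rabs beta + 2))) by nra.
  assert (Rabs beta <= r * Rabs beta) by nra.
  unfold objective.
  replace ((w - x) ^ 2) with (w ^ 2 - 2 * (w * x) + x ^ 2) by ring.
  rewrite <- (pow2_abs w). fold r. nra.
Qed.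

(** ** The maximisers and [a(x)] *)

Section Maximisers.
Variable psi : R -> R.
Hypothesis psi_cadlag : cadlag psi.
Hypothesis psi_subquadratic : subquadratic psi.

(** The objective attains its maximum: it is usc and small outside a segment. *)
Lemma objective_has_max (x : R) : exists ws, argmax psi x ws.
Proof.
  destruct (objective_coercive psi x (- objective psi x 0) psi_cadlag psi_subquadratic)
    as [R0 [HR0 HR]].
  destruct (usc_attains_max (objective psi x) (- R0) R0) as [u [Hu Hmax]]; [lra| |].
  { intros u _. apply objective_usc, psi_cadlag. }
  exists u. intros v.
  destruct (Rle_or_lt (Rabs v) R0) as [Hv|Hv].
  - apply Hmax. pose proof (Rle_abs v). pose proof (Rle_abs (- v)).
    rewrite Rabs_Ropp in *. lra.
  - specialize (HR v ltac:(lra)). specialize (Hmax 0 ltac:(lra)).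
    pose proof (Rabs_pos v). lra.
Qed.

(** Hence [a(x)] is well defined: the maximisers form a non-empty set, bounded
    above because the objective is small far to the right. *)
Lemma a_exists (x : R) : exists a, a_rel psi x a.
Proof.
  destruct (objective_has_max x) as [ws Hws].
  destruct (objective_coercive psi x (- objective psi x ws) psi_cadlag psi_subquadratic)
    as [R0 [HR0 HR]].
  assert (Hb : bound (argmax psi x)).
  { exists R0. intros w Hw. apply Rnot_lt_le; intro Hlt.
    assert (Hwa : Rabs w = w) by (apply Rabs_right; lra).
    specialize (HR w ltac:(rewrite Hwa; lra)). specialize (Hw ws). lra. }
  destruct (completeness _ Hb (ex_intro _ ws Hws)) as [a Ha]. eauto.
Qed.

(** The set of maximisers is closed (upper semicontinuity), so [a(x)] is
    itself a maximiser. *)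
Lemma a_is_argmax (x a : R) : a_rel psi x a -> argmax psi x a.
Proof.
  intros [Hub Hleast].
  assert (Hne : exists w0, argmax psi x w0).
  { apply NNPP; intro Hno. assert (a <= a - 1); [|lra]. apply Hleast.
    intros w Hw. exfalso; eauto. }
  destruct Hne as [w0 Hw0].
  intro v. eapply Rle_trans; [apply Hw0|].
  apply Rnot_lt_le; intro Hlt.
  destruct (objective_usc psi x a psi_cadlag
              ((objective psi x w0 - objective psi x a)/2) ltac:(lra)) as [d [Hd Hd']].
  (* no maximiser lies within [d] of [a], contradicting leastness of [a] *)
  assert (a <= a - d); [|lra]. apply Hleast. intros w Hw.
  assert (Hwa := Hub w Hw).
  apply Rnot_lt_le; intro Hlt2.
  specialize (Hd' w ltac:(apply Rabs_def1; lra)). specialize (Hw w0). lra.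
Qed.

Lemma objective_lt_right_of_a (x a w : R) : a_rel psi x a -> a < w ->
  objective psi x w < objective psi x a.
Proof.
  intros Ha Hw. apply Rnot_le_lt; intro Hge.
  assert (Hmax : argmax psi x w).
  { intro v. eapply Rle_trans; [apply (a_is_argmax x a Ha)|exact Hge]. }
  destruct Ha as [Hub _]. specialize (Hub w Hmax). lra.
Qed.

(** Quantitative version: if the objective stays below [m] on [[a1, +oo)],
    it does so with a linear margin.  Near [a1] use the maximum on a segment,
    far out use coercivity. *)
Lemma objective_linear_margin (x m a1 : R) :
  (forall w, a1 <= w -> objective psi x w < m) ->
  exists g, 0 < g /\ forall w, a1 <= w -> objective psi x w <= m - g * (w - a1).
Proof.
  intros Hlt.
  destruct (objective_coercive psi x (- m + Rabs a1) psi_cadlag psi_subquadratic)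
    as [R0 [HR0 HR]].
  set (b := Rmax R0 a1 + 1).
  pose proof (Rmax_l R0 a1) as Hb1. pose proof (Rmax_r R0 a1) as Hb2.
  destruct (usc_attains_max (objective psi x) a1 b) as [u [Hu Hmax]];
    [unfold b; lra| intros u _; apply objective_usc, psi_cadlag |].
  set (K := objective psi x u). assert (HK : K < m) by (apply Hlt; lra).
  assert (Hba : 0 < b - a1) by (unfold b; lra).
  set (q := (m - K) / (b - a1)).
  assert (Hq : 0 < q) by (unfold q; apply Rdiv_lt_0_compat; lra).
  assert (Hqb : q * (b - a1) = m - K) by (unfold q; field; lra).
  pose proof (Rmin_l 1 q). pose proof (Rmin_r 1 q).
  assert (Hg : 0 < Rmin 1 q) by (apply Rmin_glb_lt; lra).
  exists (Rmin 1 q). split; [exact Hg|]. intros w Hw.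
  destruct (Rle_or_lt w b) as [Hwb|Hwb].
  - specialize (Hmax w ltac:(lra)).
    assert (Rmin 1 q * (w - a1) <= q * (b - a1)); [|unfold K in *; lra].
    apply Rmult_le_compat; lra.
  - assert (Hwa : Rabs w = w) by (apply Rabs_right; unfold b in Hwb; lra).
    specialize (HR w ltac:(rewrite Hwa; unfold b in Hwb; lra)).
    rewrite Hwa in HR. pose proof (Rle_abs (- a1)) as Ha1. rewrite Rabs_Ropp in Ha1.
    assert (Rmin 1 q * (w - a1) <= 1 * (w - a1)) by (apply Rmult_le_compat_r; lra).
    lra.
Qed.

End Maximisers.

(** ** Concave functions and their right derivatives *)

Lemma concave_affine (p q : R) : concave (fun w => p + q * w).
Proof. intros x y t _. right. ring. Qed.

Lemma concave_min (f g : R -> R) :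
  concave f -> concave g -> concave (fun w => Rmin (f w) (g w)).
Proof.
  intros Hf Hg x y t Ht. apply Rmin_glb.
  - eapply Rle_trans; [|apply Hf; auto].
    apply Rplus_le_compat; apply Rmult_le_compat_l; try lra; apply Rmin_l.
  - eapply Rle_trans; [|apply Hg; auto].
    apply Rplus_le_compat; apply Rmult_le_compat_l; try lra; apply Rmin_r.
Qed.

(** Concavity at three points [u < v < w], with cleared denominators. *)
Lemma concave_three_point (C : R -> R) (u v w : R) : concave C -> u < v -> v < w ->
  (w - v) * C u + (v - u) * C w <= (w - u) * C v.
Proof.
  intros HC Huv Hvw.
  set (t := (w - v) / (w - u)).
  assert (Ht : 0 <= t <= 1).
  { unfold t. split.
    - apply Rmult_le_pos; [lra|]. left; apply Rinv_0_lt_compat; lra.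
    - apply Rmult_le_reg_r with (w - u); [lra|]. unfold Rdiv.
      rewrite Rmult_assoc, Rinv_l; lra. }
  assert (H := HC u w t Ht).
  replace (t * u + (1 - t) * w) with v in H by (unfold t; field; lra).
  assert (He : (w - u) * (t * C u + (1 - t) * C w) = (w - v) * C u + (v - u) * C w)
    by (unfold t; field; lra).
  rewrite <- He. apply Rmult_le_compat_l; lra.
Qed.

Lemma concave_touching_affine (C : R -> R) (p q u v : R) : concave C ->
  (forall w, C w <= p + q * w) -> C u = p + q * u -> C v = p + q * v ->
  forall w, u <= w <= v -> C w = p + q * w.
Proof.
  intros HC Hbelow Hu Hv w Hw. apply Rle_antisym; [apply Hbelow|].
  destruct (Req_dec w u) as [->|Hwu]; [lra|].
  destruct (Req_dec w v) as [->|Hwv]; [lra|].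
  assert (H := concave_three_point C u w v HC ltac:(lra) ltac:(lra)).
  rewrite Hu, Hv in H.
  apply Rmult_le_reg_l with (v - u); [lra|].
  replace ((v - u) * (p + q * w)) with ((v - w) * (p + q * u) + (w - u) * (p + q * v))
    by ring.
  exact H.
Qed.

Lemma right_deriv_ge (C c : R -> R) (z sig : R) : is_right_deriv C c ->
  (exists d, 0 < d /\ forall t, 0 < t < d -> sig * t <= C (z + t) - C z) -> sig <= c z.
Proof.
  intros Hrd [d0 [Hd0 H]]. apply Rnot_lt_le; intro Hlt.
  destruct (Hrd z (sig - c z) ltac:(lra)) as [d [Hd Hd']].
  pose proof (Rmin_l d d0). pose proof (Rmin_r d d0).
  pose proof (Rmin_glb_lt _ _ _ Hd Hd0).
  set (t := Rmin d d0 / 2).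
  specialize (Hd' t ltac:(unfold t; lra)). specialize (H t ltac:(unfold t; lra)).
  assert (sig <= (C (z + t) - C z) / t).
  { apply Rmult_le_reg_r with t; [unfold t; lra|]. unfold Rdiv.
    rewrite Rmult_assoc, Rinv_l; [lra|unfold t; lra]. }
  apply Rabs_def2 in Hd'. lra.
Qed.

Lemma right_deriv_le (C c : R -> R) (z sig : R) : is_right_deriv C c ->
  (exists d, 0 < d /\ forall t, 0 < t < d -> C (z + t) - C z <= sig * t) -> c z <= sig.
Proof.
  intros Hrd [d0 [Hd0 H]]. apply Rnot_lt_le; intro Hlt.
  destruct (Hrd z (c z - sig) ltac:(lra)) as [d [Hd Hd']].
  pose proof (Rmin_l d d0). pose proof (Rmin_r d d0).
  pose proof (Rmin_glb_lt _ _ _ Hd Hd0).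
  set (t := Rmin d d0 / 2).
  specialize (Hd' t ltac:(unfold t; lra)). specialize (H t ltac:(unfold t; lra)).
  assert ((C (z + t) - C z) / t <= sig).
  { apply Rmult_le_reg_r with t; [unfold t; lra|]. unfold Rdiv.
    rewrite Rmult_assoc, Rinv_l; [lra|unfold t; lra]. }
  apply Rabs_def2 in Hd'. lra.
Qed.

Lemma right_deriv_affine_piece (C c : R -> R) (w q d : R) : is_right_deriv C c -> 0 < d ->
  (forall t, 0 < t < d -> C (w + t) - C w = q * t) -> c w = q.
Proof.
  intros Hrd Hd Haff. apply Rle_antisym.
  - apply (right_deriv_le C c w q Hrd). exists d. split; auto.
    intros t Ht. rewrite Haff; lra.
  - apply (right_deriv_ge C c w q Hrd). exists d. split; auto.
    intros t Ht. rewrite Haff; lra.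
Qed.

Section ConcaveRightDerivative.
Variables C c : R -> R.
Hypothesis C_concave : concave C.
Hypothesis c_right_deriv : is_right_deriv C c.

(** The tangent line of slope [c z] at [z] lies above [C]: chord slopes
    decrease, and [c z] is their limit at [z+]. *)
Lemma support_line (z w : R) : C w <= C z + c z * (w - z).
Proof.
  destruct (Rtotal_order w z) as [Hlt | [-> | Hgt]].
  - set (s := (C z - C w) / (z - w)).
    assert (Hs' : s * (z - w) = C z - C w) by (unfold s; field; lra).
    assert (Hs : c z <= s).
    { apply (right_deriv_le C c z s c_right_deriv). exists 1. split; [lra|]. intros t Ht.
      assert (H := concave_three_point C w z (z + t) C_concave Hlt ltac:(lra)).
      nra. }
    nra.
  - lra.
  - set (s := (C w - C z) / (w - z)).
    assert (Hs' : s * (w - z) = C w - C z) by (unfold s; field; lra).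
    assert (Hs : s <= c z).
    { apply (right_deriv_ge C c z s c_right_deriv). exists (w - z). split; [lra|].
      intros t Ht.
      assert (H := concave_three_point C z (z + t) w C_concave ltac:(lra) ltac:(lra)).
      nra. }
    nra.
Qed.

Lemma right_deriv_nonincreasing : nonincreasing c.
Proof.
  intros u w Huw. pose proof (support_line u w). pose proof (support_line w u). nra.
Qed.

(** If [c] takes the same value [s] at [u <= v], then [C] is affine with slope
    [s] between them (tangent lines at both ends). *)
Lemma equal_slopes_affine (u v s : R) : c u = s -> c v = s -> C v = C u + s * (v - u).
Proof.
  intros Hu Hv. pose proof (support_line u v). pose proof (support_line v u).
  rewrite Hu in *. rewrite Hv in *. lra.
Qed.

End ConcaveRightDerivative.

(** ** Vanishing of [dc] on an interval means flatness of [c] *)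

Lemma stieltjes_zero_flat (c : R -> R) (u v : R) : nonincreasing c ->
  stieltjes_open c u v = 0 -> forall w, u <= w < v -> c w = c u.
Proof.
  intros Hmon Hzero w Hw. unfold stieltjes_open in Hzero.
  assert (HL := left_lim_spec c v (nonincreasing_left_lim c v Hmon)).
  assert (HLw : left_lim c v <= c w).
  { apply (left_lim_le c v); auto. exists (v - w). split; [lra|].
    intros t Ht. apply Hmon. lra. }
  apply Rle_antisym; [|lra].
  destruct (Req_dec w u) as [->|Hne]; [lra|]. apply Hmon; lra.
Qed.

Lemma flat_stieltjes_zero (c : R -> R) (u v v' : R) : u < v < v' ->
  (forall w, u <= w < v' -> c w = c u) -> stieltjes_open c u v = 0.
Proof.
  intros Huv Hflat. unfold stieltjes_open.
  rewrite (left_lim_locally_const c v (c u)); [lra|].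
  exists (v - u). split; [lra|]. intros t Ht. apply Hflat. lra.
Qed.

(** ** The concave majorant and the tangent lines [w |-> m - x w + x^2/2] *)

(** The affine function of slope [-x] attached to a level [m] of the
    objective: [h w = objective x w - x w + x^2/2] shows that [h] (and hence
    its concave majorant) lies below it as soon as [m] bounds the objective. *)
Definition tangent_line (x m w : R) : R := m - x * w + / 2 * x ^ 2.

Section Majorant.
Variables (psi : R -> R) (Cbar cbar : R -> R).
Hypothesis psi_cadlag : cadlag psi.
Hypothesis psi_subquadratic : subquadratic psi.
Hypothesis Cbar_majorant : is_concave_majorant (fun x => psimax psi x - / 2 * x ^ 2) Cbar.
Hypothesis cbar_right_deriv : is_right_deriv Cbar cbar.

Let Cbar_concave : concave Cbar := proj1 Cbar_majorant.

Lemma h_as_objective (x w : R) :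
  psimax psi w - / 2 * w ^ 2 = objective psi x w - x * w + / 2 * x ^ 2.
Proof. unfold objective. field. Qed.

Lemma majorant_below_tangent (x m : R) : (forall v, objective psi x v <= m) ->
  forall w, Cbar w <= tangent_line x m w.
Proof.
  pose proof Cbar_majorant as [_ [_ Hminimal]]. intros Hm w.
  assert (H := Hminimal (fun w => (m + / 2 * x ^ 2) + (- x) * w) (concave_affine _ _)).
  unfold tangent_line.
  replace (m - x * w + / 2 * x ^ 2) with ((m + / 2 * x ^ 2) + (- x) * w) by ring.
  apply H. intros v. rewrite (h_as_objective x v). specialize (Hm v). lra.
Qed.

Lemma majorant_touches_at_a (x a : R) : a_rel psi x a ->
  Cbar a = tangent_line x (objective psi x a) a.
Proof.
  intros Ha. apply Rle_antisym.
  - apply majorant_below_tangent, (a_is_argmax psi psi_cadlag x a Ha).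
  - pose proof Cbar_majorant as [_ [Habove _]]. specialize (Habove a).
    rewrite (h_as_objective x a) in Habove. unfold tangent_line. lra.
Qed.

(** Right of [a(x)] the majorant is strictly below the tangent line: by the
    linear margin of the objective, the minimum of the tangent line and a
    steeper affine function is a concave function above [h]. *)
Lemma majorant_strict_right_of_a (x a z : R) : a_rel psi x a -> a < z ->
  Cbar z < tangent_line x (objective psi x a) z.
Proof.
  intros Ha Hz. set (m := objective psi x a). set (a1 := (a + z) / 2).
  assert (Hmax : forall v, objective psi x v <= m) by exact (a_is_argmax psi psi_cadlag x a Ha).
  destruct (objective_linear_margin psi psi_cadlag psi_subquadratic x m a1) as [g [Hg Hmargin]].
  { intros w Hw. apply objective_lt_right_of_a; auto. unfold a1 in Hw. lra. }
  pose proof Cbar_majorant as [_ [_ Hminimal]].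
  set (D := fun w => Rmin ((m + / 2 * x ^ 2) + (- x) * w)
                          ((m + / 2 * x ^ 2 + g * a1) + (- x - g) * w)).
  assert (HD : Cbar z <= D z).
  { apply Hminimal.
    - apply concave_min; apply concave_affine.
    - intros v. unfold D. rewrite (h_as_objective x v). apply Rmin_glb.
      + specialize (Hmax v). lra.
      + destruct (Rle_or_lt a1 v) as [Hv|Hv].
        * specialize (Hmargin v Hv). lra.
        * specialize (Hmax v). assert (0 <= g * (a1 - v)) by (apply Rmult_le_pos; lra). lra. }
  pose proof (Rmin_r ((m + / 2 * x ^ 2) + (- x) * z)
                     ((m + / 2 * x ^ 2 + g * a1) + (- x - g) * z)).
  assert (0 < g * (z - a1)) by (apply Rmult_lt_0_compat; unfold a1; lra).
  unfold D, tangent_line in *. lra.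
Qed.

(** Flat stretches: the tangent line of slope [cbar z] at [z] has the form
    [tangent_line x m] with [x = -cbar z] and [m] the maximal objective value;
    it touches [Cbar] at [z] and at [a(x)], which therefore lies right of [z],
    and [Cbar] is affine in between, so [cbar] is constant on [[z, a(x))]. *)
Lemma flat_stretch (z : R) : exists x a, a_rel psi x a /\ z <= a /\
  forall w, z <= w < a -> cbar w = cbar z.
Proof.
  set (x := - cbar z).
  destruct (a_exists psi psi_cadlag psi_subquadratic x) as [a Ha].
  set (m := objective psi x a).
  assert (Hbelow : forall w, Cbar w <= tangent_line x m w)
    by exact (majorant_below_tangent x m (a_is_argmax psi psi_cadlag x a Ha)).
  assert (Htouch_a : Cbar a = tangent_line x m a) by exact (majorant_touches_at_a x a Ha).
  assert (Htouch_z : Cbar z = tangent_line x m z).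
  { apply Rle_antisym; [apply Hbelow|].
    pose proof (support_line Cbar cbar Cbar_concave cbar_right_deriv z a).
    unfold tangent_line, x in *. nra. }
  assert (Hza : z <= a).
  { apply Rnot_lt_le; intro Haz.
    pose proof (majorant_strict_right_of_a x a z Ha Haz) as Hstrict. fold m in Hstrict. lra. }
  exists x, a. split; [exact Ha|]. split; [exact Hza|].
  assert (Hline : forall w, tangent_line x m w = (m + / 2 * x ^ 2) + (- x) * w)
    by (intro; unfold tangent_line; ring).
  assert (Haffine : forall w, z <= w <= a -> Cbar w = (m + / 2 * x ^ 2) + (- x) * w).
  { apply concave_touching_affine; auto; intros; rewrite <- Hline; auto. }
  intros w Hw. replace (cbar z) with (- x) by (unfold x; ring).
  apply (right_deriv_affine_piece Cbar cbar w (- x) (a - w)); auto; [lra|].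
  intros t Ht. rewrite !Haffine by lra. ring.
Qed.

(** Part (ii): if [y = a(x)] and [cbar] were constant, equal to [s], near
    [y], then [Cbar] would be affine of slope [s] near [y].  The tangent line
    of slope [-x] touches [Cbar] at [y]: staying above on the left forces
    [s >= -x], being strictly above on the right forces [s < -x]. *)
Lemma a_range_in_support (y : R) : a_range psi y -> supp_dc cbar y.
Proof.
  intros [x Ha] eps Heps Hzero.
  set (s := cbar (y - eps)).
  assert (Hflat : forall w, y - eps <= w < y + eps -> cbar w = s).
  { apply stieltjes_zero_flat; auto.
    apply (right_deriv_nonincreasing Cbar cbar Cbar_concave cbar_right_deriv). }
  set (m := objective psi x y).
  assert (Hy : Cbar y = tangent_line x m y) by exact (majorant_touches_at_a x y Ha).
  assert (Hleft : Cbar (y - eps/2) <= tangent_line x m (y - eps/2))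
    by exact (majorant_below_tangent x m (a_is_argmax psi psi_cadlag x y Ha) _).
  assert (Hright : Cbar (y + eps/2) < tangent_line x m (y + eps/2))
    by (apply majorant_strict_right_of_a; auto; lra).
  assert (Hl := equal_slopes_affine Cbar cbar Cbar_concave cbar_right_deriv (y - eps/2) y s
                  ltac:(apply Hflat; lra) ltac:(apply Hflat; lra)).
  assert (Hr := equal_slopes_affine Cbar cbar Cbar_concave cbar_right_deriv y (y + eps/2) s
                  ltac:(apply Hflat; lra) ltac:(apply Hflat; lra)).
  unfold tangent_line in *. nra.
Qed.

(** Part (i): a point [y] at positive distance [eps] from the range of [a]
    lies in a flat stretch starting at [y - eps/2], which extends up to
    [y + eps]; hence [dcbar] vanishes on [(y - eps/2, y + eps/2)]. *)
Lemma support_in_shock_structure (y : R) : supp_dc cbar y -> shock_structure psi y.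
Proof.
  intros Hsupp eps Heps. apply NNPP; intro Hfar.
  destruct (flat_stretch (y - eps/2)) as [x [a [Ha [Hza Hflat]]]].
  assert (Hay : y + eps <= a).
  { apply Rnot_lt_le; intro Hlt. apply Hfar. exists a. split; [exists x; exact Ha|].
    apply Rabs_def1; lra. }
  apply (Hsupp (eps/2)); [lra|].
  apply (flat_stieltjes_zero cbar _ _ (y + eps)); [lra|].
  intros w Hw. apply Hflat. lra.
Qed.

End Majorant.

Theorem lemma2p1 (psi0 : R -> R) (Cbar cbar : R -> R) :
  cadlag psi0 ->
  subquadratic psi0 ->
  is_concave_majorant (fun x => psimax psi0 x - / 2 * x ^ 2) Cbar ->
  is_right_deriv Cbar cbar ->
  (forall y, supp_dc cbar y -> shock_structure psi0 y) /\
  (forall y, a_range psi0 y -> supp_dc cbar y) /\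
  (closed_setR (a_range psi0) ->
     forall y, supp_dc cbar y <-> shock_structure psi0 y).
Proof.
  intros Hcadlag Hsub Hmaj Hderiv.
  pose proof (support_in_shock_structure psi0 Cbar cbar Hcadlag Hsub Hmaj Hderiv) as Hi.
  pose proof (a_range_in_support psi0 Cbar cbar Hcadlag Hsub Hmaj Hderiv) as Hii.
  split; [exact Hi|]. split; [exact Hii|].
  intros Hclosed y. split; [apply Hi|]. intros Hy. apply Hii, Hclosed, Hy.
Qed.
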